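(* Let $N\ge 2$, $\lambda\ne0$, and for $x,p\in\mathbb{C}^N$ set $$L_k(x,p;\lambda)=\begin{pmatrix}\lambda(e^{2p_k}+1)+x_k(e^{2p_k}-1) & (\lambda^2-x_k^2)(e^{2p_k}-1)\\ e^{2p_k}-1 & \lambda(e^{2p_k}+1)-x_k(e^{2p_k}-1)\end{pmatrix},\qquad T_N(x,p;\lambda)=L_N(x,p;\lambda)\cdots L_1(x,p;\lambda).$$ (a) Periodic case: if $\widetilde{x}\in\mathbb{C}^N$ satisfies $e^{2p_k}=\frac{\widetilde{x}_k-x_k+\lambda}{\widetilde{x}_k-x_k-\lambda}\cdot\frac{x_k-\widetilde{x}_{k-1}+\lambda}{x_k-\widetilde{x}_{k-1}-\lambda}$ for $k=1,\dots,N$ with $\widetilde x_0=\widetilde x_N$, $x_{N+1}=x_1$, then $$(2\lambda)^N\frac{\prod_{k=1}^N(\widetilde{x}_k-x_{k+1}-\lambda)}{\prod_{k=1}^N(\widetilde{x}_k-x_k-\lambda)}$$ is an eigenvalue of $T_N(x,p;\lambda)$. (b) Open-end case: if $e^{2p_1}=\frac{\widetilde{x}_1-x_1+\lambda}{\widetilde{x}_1-x_1-\lambda}$ and the relation in (a) holds for $k=2,\dots,N$, then the $(2,1)$-entry of $T_N(x,p;\lambda)$ equals $$(2\lambda)^N\frac{\prod_{k=1}^{N-1}(\widetilde{x}_k-x_{k+1}-\lambda)}{\prod_{k=1}^N(\widetilde{x}_k-x_k-\lambda)}.$$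
   Context: The relation between $(x,p)$ and $\widetilde x$ is the first half of the Bäcklund transformation $F_\lambda$ of the symmetric rational multiplicative Toda-type system $\ddot x_k=-(\dot x_k^2-1)\big(\frac{1}{x_{k+1}-x_k}-\frac{1}{x_k-x_{k-1}}\big)$. *)

From HB Require Import structures.
From mathcomp Require Import all_boot all_order all_algebra.
From mathcomp Require Import complex.
From mathcomp Require Import all_classical all_reals all_analysis.
Set Implicit Arguments. Unset Strict Implicit. Unset Printing Implicit Defensive.
Import Order.TTheory GRing.Theory Num.Theory.
Local Open Scope ring_scope.
Local Open Scope complex_scope.

Definition cexp (R : realType) (z : R[i]) : R[i] :=
  let: a +i* b := z in (expR a * cos b) +i* (expR a * sin b).

Definition Lmat (R : realType) (lam xk pk : R[i]) : 'M[R[i]]_2 :=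
  let E := cexp (2 * pk) in
  \matrix_(i < 2, j < 2)
    if (i : nat) == 0%N then
      (if (j : nat) == 0%N then lam * (E + 1) + xk * (E - 1)
       else (lam ^+ 2 - xk ^+ 2) * (E - 1))
    else
      (if (j : nat) == 0%N then E - 1
       else lam * (E + 1) - xk * (E - 1)).

(* monodromy T_N = L_N * ... * L_1 (indices 0-based: L_{N-1} ... L_0) *)
Definition Tmat (R : realType) (N : nat) (x p : 'I_N -> R[i]) (lam : R[i])
  : 'M[R[i]]_2 :=
  \prod_(i < N) Lmat lam (x (rev_ord i)) (p (rev_ord i)).

From HB Require Import structures.
From mathcomp Require Import all_boot all_order all_algebra.
From mathcomp Require Import complex.
From mathcomp Require Import all_classical all_reals all_analysis.
From mathcomp Require Import ring.
Set Implicit Arguments. Unset Strict Implicit. Unset Printing Implicit Defensive.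
Import Order.TTheory GRing.Theory Num.Theory.
Local Open Scope ring_scope.

(** The Bäcklund relation for [e^{2p_k}] says exactly that [L_k] maps the
    vector [(x~_{k-1}, 1)] to [2λ(x~_{k-1} - x_k - λ)/(x~_k - x_k - λ)] times
    [(x~_k, 1)]. Chaining these, the monodromy maps [(x~_N, 1)] = [(x~_0, 1)]
    to the product of the factors times itself, and that product is the
    claimed eigenvalue once the numerators are shifted by one index. In the
    open-end case [L_1] maps [(1, 0)] to [2λ/(x~_1 - x_1 - λ)] times
    [(x~_1, 1)], so the first column of [T_N] is the product of the factors
    times [(x~_N, 1)]. *)

Lemma ord_pred0 n : ord_pred (@ord0 n) = ord_max.
Proof. by apply/val_inj; rewrite /= modn_small. Qed.

Lemma ord_pred_lift n (j : 'I_n) : ord_pred (lift ord0 j) = widen_ord (leqnSn n) j.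
Proof.
by apply/val_inj; rewrite /= add0n modnDr modn_small // ltnS ltnW.
Qed.

Lemma prodf_scaled_div (F : fieldType) n (c : F) (a b : 'I_n -> F) :
  \prod_(k < n) (c * a k / b k) = c ^+ n * (\prod_(k < n) a k) / \prod_(k < n) b k.
Proof. by rewrite !big_split /= prodr_const card_ord prodfV. Qed.

Lemma eigenvalue_trmx (F : fieldType) n (A : 'M[F]_n) a :
  eigenvalue A^T a = eigenvalue A a.
Proof.
rewrite !eigenvalue_root_char /char_poly /char_poly_mx -det_tr.
by congr (root (\det _) a); apply/matrixP => i j; rewrite !mxE eq_sym.
Qed.

Lemma eigenvalue_col (F : fieldType) n (A : 'M[F]_n) a (w : 'cV_n) :
  A *m w = a *: w -> w != 0 -> eigenvalue A a.
Proof.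
move=> Aw w_neq0; rewrite -eigenvalue_trmx; apply/eigenvalueP; exists w^T.
  by rewrite -trmx_mul Aw linearZ.
by rewrite trmx_eq0.
Qed.

Lemma mulmx_prod_rev_chain (R : comNzRingType) m n (F : 'I_n.+1 -> 'M[R]_m)
    (mu : 'I_n.+1 -> R) (u v : 'I_n.+1 -> 'cV[R]_m) :
  (forall i, F i *m u i = mu i *: v i) ->
  (forall j : 'I_n, u (lift ord0 j) = v (widen_ord (leqnSn n) j)) ->
  (\prod_(i < n.+1) F (rev_ord i)) *m u ord0 = (\prod_(i < n.+1) mu i) *: v ord_max.
Proof.
elim: n F mu u v => [|n IHn] F mu u v Fuv uv.
  have ord1E (i : 'I_1) : i = ord0 by apply/val_inj; case: i => [[]].
  by rewrite !big_ord1 [rev_ord _]ord1E [ord_max]ord1E Fuv.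
pose w := widen_ord (leqnSn n.+1).
have uvw (j : 'I_n) : u (w (lift ord0 j)) = v (w (widen_ord (leqnSn n) j)).
  by rewrite -[w (widen_ord _ j)]/(widen_ord _ (widen_ord _ j)) -uv; congr u; apply/val_inj.
have IHw := IHn (F \o w) (mu \o w) (u \o w) (v \o w) (fun i => Fuv (w i)) uvw.
rewrite big_ord_recl [in RHS]big_ord_recr /= -mulmxE -mulmxA.
have -> : \prod_(i < n.+1) F (rev_ord (lift ord0 i)) = \prod_(i < n.+1) F (w (rev_ord i)).
  by apply: eq_bigr => i _; congr F; apply/val_inj.
have -> : u ord0 = u (w ord0) by congr u; apply/val_inj.
rewrite IHw /= -scalemxAr.
have -> : v (w ord_max) = u (rev_ord ord0).
  by rewrite -[w ord_max]/(widen_ord _ ord_max) -uv; congr u; apply/val_inj.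
have -> : rev_ord ord0 = ord_max :> 'I_n.+2 by apply/val_inj.
by rewrite Fuv scalerA mulrC.
Qed.

Definition col2 (T : Type) (a b : T) : 'cV[T]_2 :=
  \col_(i < 2) if (i : nat) == 0%N then a else b.

Lemma col2_neq0 (R : nzRingType) (a : R) : col2 a 1 != 0.
Proof.
by apply/negP => /eqP/matrixP/(_ 1 0); rewrite !mxE /= => /eqP; rewrite oner_eq0.
Qed.

Lemma Lmat_mul_col2 (R : realType) (lam xk pk xt xt' : R[i]) :
  xt - xk - lam != 0 -> xk - xt' - lam != 0 ->
  cexp (2 * pk) = (xt - xk + lam) / (xt - xk - lam) *
                  ((xk - xt' + lam) / (xk - xt' - lam)) ->
  Lmat lam xk pk *m col2 xt' 1 =
    (2 * lam * (xt' - xk - lam) / (xt - xk - lam)) *: col2 xt 1.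
Proof.
move=> xt_neq xt'_neq E; rewrite /Lmat E; apply/matrixP => i j.
rewrite !mxE !big_ord_recr big_ord0 !mxE /=.
by case: i => [[|[|//]]] _ /=; rewrite add0r; field; rewrite xt_neq xt'_neq.
Qed.

Lemma Lmat_mul_col2_10 (R : realType) (lam xk pk xt : R[i]) :
  xt - xk - lam != 0 ->
  cexp (2 * pk) = (xt - xk + lam) / (xt - xk - lam) ->
  Lmat lam xk pk *m col2 1 0 = (2 * lam / (xt - xk - lam)) *: col2 xt 1.
Proof.
move=> xt_neq E; rewrite /Lmat E; apply/matrixP => i j.
rewrite !mxE !big_ord_recr big_ord0 !mxE /=.
by case: i => [[|[|//]]] _ /=; field; rewrite xt_neq.
Qed.

Lemma Tmat_periodic_eigenvalue (R : realType) n (lam : R[i])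
    (x p xt : 'I_n.+1 -> R[i]) :
  (forall k, xt k - x k - lam != 0) ->
  (forall k, x k - xt (ord_pred k) - lam != 0) ->
  (forall k, cexp (2 * p k) = (xt k - x k + lam) / (xt k - x k - lam) *
       ((x k - xt (ord_pred k) + lam) / (x k - xt (ord_pred k) - lam))) ->
  eigenvalue (Tmat x p lam)
    ((2 * lam) ^+ n.+1 * (\prod_(k < n.+1) (xt k - x (ordS k) - lam))
                       / (\prod_(k < n.+1) (xt k - x k - lam))).
Proof.
move=> xt_neq xt_pred_neq E.
pose mu k := 2 * lam * (xt (ord_pred k) - x k - lam) / (xt k - x k - lam).
have Tcol : Tmat x p lam *m col2 (xt ord_max) 1 =
            (\prod_(k < n.+1) mu k) *: col2 (xt ord_max) 1.
  rewrite /Tmat -[in LHS]ord_pred0.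
  apply: (mulmx_prod_rev_chain (F := fun k => Lmat lam (x k) (p k))
           (u := fun k => col2 (xt (ord_pred k)) 1) (v := fun k => col2 (xt k) 1)) => [k|j].
    exact: Lmat_mul_col2.
  by rewrite ord_pred_lift.
have -> : \prod_(k < n.+1) (xt k - x (ordS k) - lam) =
          \prod_(k < n.+1) (xt (ord_pred k) - x k - lam).
  by rewrite (reindex_inj (@ord_pred_inj _)); apply: eq_bigr => k _; rewrite ord_predK.
by rewrite -prodf_scaled_div; apply: eigenvalue_col Tcol (col2_neq0 _).
Qed.

Lemma Tmat_open_end_entry (R : realType) n (lam : R[i])
    (x p xt : 'I_n.+1 -> R[i]) :
  (forall k, xt k - x k - lam != 0) ->
  (forall k : 'I_n.+1, k != 0 :> nat -> x k - xt (ord_pred k) - lam != 0) ->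
  cexp (2 * p ord0) = (xt ord0 - x ord0 + lam) / (xt ord0 - x ord0 - lam) ->
  (forall k : 'I_n.+1, k != 0 :> nat ->
     cexp (2 * p k) = (xt k - x k + lam) / (xt k - x k - lam) *
       ((x k - xt (ord_pred k) + lam) / (x k - xt (ord_pred k) - lam))) ->
  Tmat x p lam ord_max ord0 =
    (2 * lam) ^+ n.+1 * (\prod_(k < n.+1 | (k.+1 < n.+1)%N) (xt k - x (ordS k) - lam))
                      / (\prod_(k < n.+1) (xt k - x k - lam)).
Proof.
move=> xt_neq xt_pred_neq E0 E.
pose a (k : 'I_n.+1) := if (k : nat) == 0%N then 1 else xt (ord_pred k) - x k - lam.
pose u (k : 'I_n.+1) := if (k : nat) == 0%N then col2 1 0 else col2 (xt (ord_pred k)) 1.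
have Tcol : Tmat x p lam *m col2 1 0 =
            (\prod_(k < n.+1) (2 * lam * a k / (xt k - x k - lam))) *: col2 (xt ord_max) 1.
  apply: (mulmx_prod_rev_chain (F := fun k => Lmat lam (x k) (p k)) (u := u)
           (v := fun k => col2 (xt k) 1)) => [k|j]; last by rewrite /u /= ord_pred_lift.
  rewrite /u /a; case: (unliftP ord0 k) => [j ->|->] /=.
    by apply: Lmat_mul_col2; [apply: xt_neq | apply: xt_pred_neq | apply: E].
  by rewrite mulr1; apply: Lmat_mul_col2_10 (xt_neq _) E0.
have -> : Tmat x p lam ord_max ord0 = (Tmat x p lam *m col2 1 0) ord_max ord0.
  rewrite !mxE !big_ord_recr big_ord0 !mxE /= mulr1 mulr0 add0r addr0.
  by congr (_ _ _); apply/val_inj.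
rewrite Tcol !mxE /= mulr1 prodf_scaled_div; congr (_ * _ / _).
rewrite [RHS]big_mkcond [RHS](reindex_inj (@ord_pred_inj _)); apply: eq_bigr => k _.
rewrite ord_predK /a; case: (unliftP ord0 k) => [j ->|->].
  by rewrite ord_pred_lift /= ltnS ltn_ord.
by rewrite ord_pred0 /= ltnn.
Qed.

Theorem theorem15 (R : realType) (N : nat) (hN : (2 <= N)%N)
    (lam : R[i]) (hlam : lam != 0) (x p xt : 'I_N -> R[i]) :
  (* (a) periodic case *)
  ((forall k : 'I_N, xt k - x k - lam != 0) ->
   (forall k : 'I_N, x k - xt (ord_pred k) - lam != 0) ->
   (forall k : 'I_N, cexp (2 * p k) =
       (xt k - x k + lam) / (xt k - x k - lam) *
       ((x k - xt (ord_pred k) + lam) / (x k - xt (ord_pred k) - lam))) ->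
   eigenvalue (Tmat x p lam)
     ((2 * lam) ^+ N * (\prod_(k < N) (xt k - x (ordS k) - lam))
                    / (\prod_(k < N) (xt k - x k - lam))))
  /\
  (* (b) open-end case *)
  ((forall k : 'I_N, xt k - x k - lam != 0) ->
   (forall k : 'I_N, k != 0 :> nat -> x k - xt (ord_pred k) - lam != 0) ->
   (forall k : 'I_N, k = 0 :> nat ->
       cexp (2 * p k) = (xt k - x k + lam) / (xt k - x k - lam)) ->
   (forall k : 'I_N, k != 0 :> nat -> cexp (2 * p k) =
       (xt k - x k + lam) / (xt k - x k - lam) *
       ((x k - xt (ord_pred k) + lam) / (x k - xt (ord_pred k) - lam))) ->
   Tmat x p lam ord_max ord0 =
     (2 * lam) ^+ N * (\prod_(k < N | (k.+1 < N)%N) (xt k - x (ordS k) - lam))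
                    / (\prod_(k < N) (xt k - x k - lam))).
Proof.
case: N hN x p xt => [//|n] _ x p xt; split.
  exact: Tmat_periodic_eigenvalue.
by move=> xt_neq xt_pred_neq E0 E; apply: Tmat_open_end_entry => //; apply: E0.
Qed.
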